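(* Let $\mathbf{J}\in\mathbb{R}^{n\times n}$ be a real symmetric matrix with zero diagonal, and let $\alpha,\beta>0$ be such that $\lambda_{\min}(\mathbf{J}+\alpha\mathbf{I})>0$. Let $\{\boldsymbol{x}^{(k)}\}_{k\ge0}$ be the DOCH iterates starting from an arbitrary $\boldsymbol{x}^{(0)}\in\mathbb{R}^n$. Then $\{\boldsymbol{x}^{(k)}\}$ converges to a critical point of $\mathcal{H}$.
   Context: Let $f(\boldsymbol{x})=\frac{\beta}{4}\sum_i x_i^4$, $g(\boldsymbol{x})=\frac12\boldsymbol{x}^\top(\mathbf{J}+\alpha\mathbf{I})\boldsymbol{x}$ and $\mathcal{H}=f-g$ (equivalently $\mathcal{H}(\boldsymbol{x})=\frac{\beta}{4}\sum_i x_i^4-\frac{\alpha}{2}\sum_i x_i^2-\frac12\boldsymbol{x}^\top\mathbf{J}\boldsymbol{x}$). The DOCH iterates are defined by $\boldsymbol{x}^{(k+1)}$ being the minimizer of $F_k(\boldsymbol{x})=f(\boldsymbol{x})-g(\boldsymbol{x}^{(k)})-\nabla g(\boldsymbol{x}^{(k)})^\top(\boldsymbol{x}-\boldsymbol{x}^{(k)})$; explicitly, $\boldsymbol{x}^{(k+1)}=\varphi(\beta^{-1}(\mathbf{J}+\alpha\mathbf{I})\boldsymbol{x}^{(k)})$ with $\varphi$ the componentwise real cube root. A critical point is a point where $\nabla\mathcal{H}=\mathbf{0}$. *)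

From HB Require Import structures.
From mathcomp Require Import all_boot all_order all_algebra.
From mathcomp Require Import all_classical all_reals all_analysis.
Set Implicit Arguments. Unset Strict Implicit. Unset Printing Implicit Defensive.
Import Order.TTheory GRing.Theory Num.Theory.
Import numFieldNormedType.Exports.
Local Open Scope ring_scope.

Definition cbrt {R : realType} (x : R) : R := Num.sg x * (`|x| `^ (3%:R^-1)).

Definition phi {R : realType} {n : nat} (v : 'cV[R]_n) : 'cV[R]_n :=
  \col_i cbrt (v i 0).

Definition Hfun {R : realType} {n : nat} (J : 'M[R]_n) (alpha beta : R)
  (x : 'cV[R]_n) : R :=
  beta / 4%:R * (\sum_i (x i 0) ^+ 4) - alpha / 2%:R * (\sum_i (x i 0) ^+ 2)
  - 2%:R^-1 * (x^T *m J *m x) 0 0.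

Definition doch {R : realType} {n : nat} (J : 'M[R]_n) (alpha beta : R)
  (x0 : 'cV[R]_n) (k : nat) : 'cV[R]_n :=
  iter k (fun x => phi (beta^-1 *: ((J + alpha%:M) *m x))) x0.

Definition critical_point {R : realType} {n : nat} (H : 'cV[R]_n -> R)
  (x : 'cV[R]_n) : Prop :=
  differentiable H x /\ 'd H x = (fun _ => 0) :> ('cV[R]_n -> R).

(* The energy H = f - g decreases along the DOCH iterates by at least
   1/2 (x_{k+1} - x_k)^T (J + alpha I) (x_{k+1} - x_k) and is bounded below on
   the (bounded) orbit, so positive definiteness of J + alpha I makes the steps
   square-summable: x_{k+1} - x_k -> 0, and the residuals of the fixed-point
   system beta x^3 = (J + alpha I) x tend to 0.  That system is
   zero-dimensional: modulo its residuals every monomial reduces to the 3^n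
   monomials of degree < 3 in each variable, so for each j some nonzero
   polynomial p_j satisfies |p_j(x_j)| = O(residual).  Each coordinate thus
   ends up near the finite root set of p_j while its steps vanish, hence
   converges, and the limit l solves beta l^3 = (J + alpha I) l, which is
   exactly grad H(l) = 0. *)

From HB Require Import structures.
From mathcomp Require Import all_boot all_order all_algebra.
From mathcomp Require Import all_classical all_reals all_analysis.
From mathcomp Require Import ring lra.
Import Order.TTheory GRing.Theory Num.Theory.
Import numFieldNormedType.Exports.
Set Implicit Arguments. Unset Strict Implicit. Unset Printing Implicit Defensive.
Local Open Scope classical_set_scope.
Local Open Scope ring_scope.

Section real_sequences.
Variable R : realType.
Implicit Types (u v : nat -> R) (s : seq R).

Lemma cvg_sum (T : Type) (F : set_system T) (I : finType)
    (f : I -> T -> R) (l : I -> R) : Filter F ->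
  (forall i, f i x @[x --> F] --> l i) -> \sum_i f i x @[x --> F] --> \sum_i l i.
Proof. by move=> FF fl; apply: cvg_big => //; exact: add_continuous. Qed.

Lemma cvg0_sqr_le u v : (forall k, v k ^+ 2 <= u k) -> u @ \oo --> 0 ->
  v @ \oo --> 0.
Proof.
move=> vu /cvgrPdist_lt u0; apply/cvgrPdist_lt => e e0.
apply: filterS (u0 _ (exprn_gt0 2 e0)) => k; rewrite !sub0r !normrN => uk.
rewrite -(@ltr_pXn2r _ 2) ?nnegrE ?(ltW e0) //.
by rewrite real_normK ?num_real // (le_lt_trans (vu k)) // (le_lt_trans (ler_norm _)).
Qed.

Lemma nneg_series_bounded_cvg0 u (C : R) : (forall k, 0 <= u k) ->
  (forall N, \sum_(k < N) u k <= C) -> u @ \oo --> 0.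
Proof.
move=> u_ge0 uC; apply: cvg_series_cvg_0; apply: nondecreasing_is_cvgn.
  by move=> a b ab; apply: (@nondecreasing_series _ u predT 0) => // k _ _.
by exists C => _ [N _ <-]; rewrite /series /= big_mkord.
Qed.

Lemma seq_pos_lower_bound s : exists2 g : R, 0 < g & {in s, forall d, 0 < d -> g <= d}.
Proof.
elim: s => [|d s [g g0 gs]]; first by exists 1.
exists (if 0 < d then Order.min g d else g) => [|e]; first by case: ifP; rewrite ?lt_min ?g0.
rewrite inE => /orP[/eqP-> ->|es e0]; first by rewrite ge_min lexx orbT.
by case: ifP => _; rewrite ?ge_min gs.
Qed.

Lemma seq_separation s :
  exists2 g : R, 0 < g & {in s &, forall z z', `|z - z'| < g -> z = z'}.
Proof.
have [g g0 gs] := seq_pos_lower_bound [seq `|z - z'| | z <- s, z' <- s].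
exists g => // z z' zs z's; apply: contraTeq => zz'.
by rewrite -leNgt gs ?allpairs_f // normr_gt0 subr_eq0.
Qed.

Lemma near_seq_of_prod_small s (t e : R) : 0 < e ->
  \prod_(z <- s) `|t - z| < e ^+ size s -> exists2 z, z \in s & `|t - z| < e.
Proof.
move=> e0; apply: contraPP => /forall2NP far; apply/negP; rewrite -leNgt.
have {}far : {in s, forall z, e <= `|t - z|}.
  by move=> z zs; have [/(_ zs)[] | /negP] := far z; rewrite -leNgt.
elim: s far => [|a s IH] far; first by rewrite big_nil expr0.
rewrite big_cons exprS ler_pM ?exprn_ge0 ?(ltW e0) ?far ?mem_head //.
by apply: IH => z zs; rewrite far // inE zs orbT.
Qed.

(* Once the steps are shorter than a third of the separation of [s], the
   sequence can no longer move from one point of [s] to another. *)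
Lemma cvg_slow_near_seq u s :
  (fun k => u k.+1 - u k) @ \oo --> 0 ->
  (forall e, 0 < e -> \forall k \near \oo, exists2 z, z \in s & `|u k - z| < e) ->
  exists2 z, z \in s & u @ \oo --> z.
Proof.
move=> /cvgrPdist_lt du near_s.
have [g g0 sep] := seq_separation s; have g30 : 0 < g / 3 by rewrite divr_gt0.
have [N _ NP] := filterI (du _ g30) (near_s _ g30).
have /= [_ [z zs uNz]] := NP N (leqnn N).
have stay k : (N <= k)%N -> `|u k - z| < g / 3.
  elim: k => [|k IH].
    by rewrite leqn0 => /eqP N0; move: uNz; rewrite N0.
  rewrite leq_eqVlt => /predU1P[<- //|Nk].
  have [+ [z' z's uz']] := NP k.+1 (ltnW Nk).
  have [+ _] := NP k Nk; rewrite sub0r normrN => step _.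
  suff -> : z = z' by [].
  apply: sep => //; rewrite (le_lt_trans (ler_distD (u k) z z')) //.
  rewrite (le_lt_trans (lerD (lexx _) (ler_distD (u k.+1) _ _))) //.
  rewrite [`|u k - _|]distrC [`|z - _|]distrC; have := IH Nk; lra.
exists z => //; apply/cvgrPdist_lt => e e0.
have eg_gt0 : 0 < Order.min e (g / 3) by rewrite lt_min e0.
near=> k; have [z' z's] : exists2 z', z' \in s & `|u k - z'| < Order.min e (g / 3).
  by near: k; exact: near_s.
rewrite lt_min => /andP[uz'e uz'g].
have zz' : z = z'.
  apply: sep => //; rewrite (le_lt_trans (ler_distD (u k) z z')) // distrC.
  have : `|u k - z| < g / 3 by apply: stay; near: k; exact: nbhs_infty_ge.
  lra.
by rewrite distrC zz'.
Unshelve. all: by end_near. Qed.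

Lemma cvg_mx_entries (T : Type) (F : set_system T) m p
    (X : T -> 'M[R]_(m, p)) (L : 'M[R]_(m, p)) : Filter F ->
  (forall i j, X t i j @[t --> F] --> L i j) -> X t @[t --> F] --> L.
Proof.
move=> FF XL; apply/cvgrPdist_lt => e e0.
have : \forall t \near F, forall ij : 'I_m * 'I_p, `|L ij.1 ij.2 - X t ij.1 ij.2| < e.
  by apply: filter_forall => -[i j]; exact: (cvgrPdist_lt _ _).1 (XL i j) e e0.
apply: filterS => t LXt; rewrite -[`|_|]/(mx_norm _) mx_normrE.
by apply/bigmax_ltP; split => // ij _; rewrite !mxE.
Qed.

End real_sequences.

Section polynomial_lower_bound.
Variable R : realType.
Implicit Types (p : {poly R}) (B : R).

Lemma rootless_horner_lower_bound p B : (forall z, ~~ root p z) ->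
  exists2 c : R, 0 < c & forall t, `|t| <= B -> c <= `|p.[t]|.
Proof.
move=> noroot; have [B0|B_ge0] := ltP B 0.
  by exists 1 => // t tB; move: (le_trans (normr_ge0 t) tB); rewrite leNgt B0.
have cont : {within `[- B, B], continuous (fun t => `|p.[t]|)}.
  apply: continuous_subspaceT => t.
  by apply: continuous_comp; [exact: continuous_horner | exact: norm_continuous].
have [c _ cmin] := EVT_min (ge0_cp B_ge0).2 cont.
exists `|p.[c]|; first by rewrite normr_gt0; exact: noroot.
by move=> t tB; apply: cmin; rewrite in_itv /= -ler_norml.
Qed.

Lemma horner_lower_bound p B : p != 0 ->
  exists s : seq R, exists2 c : R, 0 < c &
    forall t, `|t| <= B -> c * \prod_(z <- s) `|t - z| <= `|p.[t]|.
Proof.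
move: {2}(size p) (leqnn (size p)) => m; elim: m p => [|m IH] p.
  by rewrite leqn0 size_poly_eq0 => /eqP->; rewrite eqxx.
move=> sz p0; have [[z rz]|noroot] := pselect (exists z, root p z); last first.
  have [c c0 cB] : exists2 c : R, 0 < c & forall t, `|t| <= B -> c <= `|p.[t]|.
    by apply: rootless_horner_lower_bound => z; apply/negP => rz; apply: noroot; exists z.
  by exists [::], c => // t tB; rewrite big_nil mulr1 cB.
have [q pq] := factor_theorem p z rz.
have q0 : q != 0 by apply: contraNneq p0 => q0; rewrite pq q0 mul0r.
have szq : (size q <= m)%N.
  by move: sz; rewrite pq size_mul ?polyXsubC_eq0 // size_XsubC addn2 ltnS.
have [s [c c0 cs]] := IH q szq q0.
exists (z :: s), c => // t tB.
rewrite big_cons pq hornerM hornerXsubC normrM mulrCA mulrC.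
by rewrite ler_wpM2r ?normr_ge0 ?cs.
Qed.

End polynomial_lower_bound.

Lemma left_kernel_nonzero (F : fieldType) (N : nat) (C : 'M[F]_(N.+1, N)) :
  exists2 lam : 'rV_N.+1, lam != 0 & lam *m C = 0.
Proof.
have : kermx C != 0.
  by rewrite kermx_eq0 /row_free ltn_eqF // ltnS rank_leq_col.
apply: contraNP => /forall2NP none; apply/eqP/row_matrixP => r; rewrite row0.
have [/negP/negbNE/eqP //|] := none (row r (kermx C)).
by rewrite -row_mul mulmx_ker row0.
Qed.

Section cubic_elimination.
Variables (R : realFieldType) (n : nat) (a : 'M[R]_n) (B : R).
Hypothesis B_ge0 : 0 <= B.
Implicit Types (x : 'cV[R]_n) (e : 'I_n -> nat).

Definition cubic_residual x i := x i 0 ^+ 3 - \sum_j a i j * x j 0.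
Definition residual_norm x := \sum_i `|cubic_residual x i|.
Definition monomial e x := \prod_i x i 0 ^+ e i.
Definition unit_exponent (k : 'I_n) (m : nat) : 'I_n -> nat := fun l => ((l == k) * m)%N.
Definition reduced_monomial (f : {ffun 'I_n -> 'I_3}) := monomial (fun i => f i).
Definition in_box x := forall i, `|x i 0| <= B.

Lemma residual_norm_ge0 x : 0 <= residual_norm x.
Proof. exact: sumr_ge0. Qed.

Lemma residual_le_norm x i : `|cubic_residual x i| <= residual_norm x.
Proof. by rewrite /residual_norm (bigD1 i) //= lerDl sumr_ge0. Qed.

Lemma monomialD e e' x :
  monomial (fun l => e l + e' l)%N x = monomial e x * monomial e' x.
Proof. by rewrite /monomial -big_split; apply: eq_bigr => l _; rewrite exprD. Qed.

Lemma monomial_unit k m x : monomial (unit_exponent k m) x = x k 0 ^+ m.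
Proof.
rewrite /monomial (bigD1 k) //= /unit_exponent eqxx mul1n big1 ?mulr1 //.
by move=> l /negbTE->; rewrite mul0n expr0.
Qed.

Lemma monomial_in_box e x : in_box x -> `|monomial e x| <= \prod_i B ^+ e i.
Proof.
move=> xB; rewrite normr_prod; apply: ler_prod => i _.
by rewrite normr_ge0 /= normrX lerXn2r ?nnegrE ?xB.
Qed.

Definition reducible e := exists c : {ffun 'I_n -> 'I_3} -> R, exists K : R,
  forall x, in_box x ->
    `|monomial e x - \sum_f c f * reduced_monomial f x| <= K * residual_norm x.

Lemma reducible_reduced e : (forall i, e i < 3)%N -> reducible e.
Proof.
move=> e_lt3; pose f0 : {ffun 'I_n -> 'I_3} := [ffun i => Ordinal (e_lt3 i)].
exists (fun f => (f == f0)%:R), 0 => x _.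
rewrite mul0r (bigD1 f0) //= eqxx mul1r big1 => [|f /negbTE->]; last by rewrite mul0r.
rewrite addr0 /reduced_monomial /monomial.
by under [X in _ - X]eq_bigr do rewrite ffunE; rewrite subrr normr0.
Qed.

(* Multiplying by [x_i^3] is, up to [cubic_residual x i], multiplying by
   [\sum_k a i k * x_k], which lowers the total degree by two. *)
Lemma reducible_mul_cube e i :
  (forall k, reducible (fun l => e l + unit_exponent k 1 l)%N) ->
  reducible (fun l => e l + unit_exponent i 3 l)%N.
Proof.
move=> red; have [c cK] := choice red; have [K cKK] := choice cK.
exists (fun f => \sum_k a i k * c k f), (\prod_l B ^+ e l + \sum_k `|a i k| * K k).
move=> x xB; rewrite monomialD monomial_unit.
have -> : \sum_f (\sum_k a i k * c k f) * reduced_monomial f x =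
    \sum_k a i k * \sum_f c k f * reduced_monomial f x.
  under eq_bigr do rewrite mulr_suml; rewrite exchange_big; apply: eq_bigr => k _.
  by rewrite mulr_sumr; apply: eq_bigr => f _; rewrite mulrA.
have -> : monomial e x * x i 0 ^+ 3 = monomial e x * cubic_residual x i +
    \sum_k a i k * monomial (fun l => e l + unit_exponent k 1 l)%N x.
  suff -> : \sum_k a i k * monomial (fun l => e l + unit_exponent k 1 l)%N x =
      monomial e x * \sum_k a i k * x k 0 by rewrite /cubic_residual; ring.
  rewrite mulr_sumr; apply: eq_bigr => k _.
  by rewrite monomialD monomial_unit expr1 mulrCA.
rewrite -addrA -sumrB (le_trans (ler_normD _ _)) // mulrDl lerD //.
  by rewrite normrM ler_pM ?monomial_in_box ?residual_le_norm.
rewrite (le_trans (ler_norm_sum _ _ _)) // mulr_suml ler_sum // => k _.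
by rewrite -mulrBr normrM -mulrA ler_wpM2l ?cKK.
Qed.

Lemma sum_unit_exponent k m : (\sum_l unit_exponent k m l)%N = m.
Proof.
rewrite (bigD1 k) //= /unit_exponent eqxx mul1n big1 ?addn0 //.
by move=> l /negbTE->.
Qed.

Lemma monomial_reducible e : reducible e.
Proof.
have [D] := ubnP (\sum_i e i); elim: D e => [//|D IH] e; rewrite ltnS => eD.
have [e_lt3|/existsNP[i /negP]] := pselect (forall i, e i < 3)%N.
  exact: reducible_reduced.
rewrite -leqNgt => ei; pose e' l := if l == i then (e i - 3)%N else e l.
have ee' : e = (fun l => e' l + unit_exponent i 3 l)%N.
  apply/funext => l; rewrite /e' /unit_exponent.
  by case: eqP => [->|_]; rewrite ?subnK ?mul1n ?mul0n ?addn0.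
rewrite ee' in eD *; apply: reducible_mul_cube => k; apply: IH; apply: leq_trans eD.
by rewrite !big_split /= !sum_unit_exponent ltn_add2l.
Qed.

(* Some [N + 1] powers of [x_j] lie in the [N]-dimensional span of the
   reduced monomials, so a nontrivial combination of them is [O(residual)]. *)
Lemma coord_annihilator j : exists2 p : {poly R}, p != 0 &
  exists K : R, forall x, in_box x -> `|p.[x j 0]| <= K * residual_norm x.
Proof.
pose N := #|{: {ffun 'I_n -> 'I_3}}|.
have [C CK] := choice (fun t : 'I_N.+1 => monomial_reducible (unit_exponent j t)).
have [K CKK] := choice CK.
have [lam lam0 lamC] := left_kernel_nonzero (\matrix_(t, b) C t (enum_val b)).
exists (\poly_(t < N.+1) lam 0 (inord t)).
  apply: contraNneq lam0 => p0; apply/eqP/rowP => t; rewrite mxE.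
  by have := congr1 (fun q : {poly R} => q`_t) p0; rewrite coef_poly ltn_ord inord_val coef0.
exists (\sum_t `|lam 0 t| * K t) => x xB; rewrite horner_poly.
have -> : \sum_(t < N.+1) lam 0 (inord t) * x j 0 ^+ t =
    \sum_t lam 0 t * (monomial (unit_exponent j t) x - \sum_f C t f * reduced_monomial f x).
  under [RHS]eq_bigr do rewrite mulrBr monomial_unit mulr_sumr.
  rewrite sumrB [X in _ - X]exchange_big /= [X in _ - X]big1 ?subr0 => [|f _].
    by apply: eq_bigr => t _; rewrite inord_val.
  under eq_bigr do rewrite mulrA; rewrite -mulr_suml.
  have -> : \sum_t lam 0 t * C t f = (lam *m \matrix_(t, b) C t (enum_val b)) 0 (enum_rank f).
    by rewrite !mxE; apply: eq_bigr => t _; rewrite !mxE enum_rankK.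
  by rewrite lamC mxE mul0r.
rewrite (le_trans (ler_norm_sum _ _ _)) // mulr_suml ler_sum // => t _.
by rewrite normrM -mulrA ler_wpM2l ?CKK.
Qed.

End cubic_elimination.

Lemma linear_coef_eq0 (R : realFieldType) (a b : R) :
  (forall t, 0 <= a * t + b * t ^+ 2) -> a = 0.
Proof.
move=> ge0; apply/eqP; apply: contraT => a0.
pose t := - a / (`|b| + 1); have b1 : 0 < `|b| + 1 by rewrite ltr_pwDr.
have : a * t + b * t ^+ 2 = a ^+ 2 / (`|b| + 1) * (b / (`|b| + 1) - 1).
  by rewrite /t; field; rewrite gt_eqF.
move/(congr1 (fun r => 0 <= r)); rewrite ge0 pmulr_rge0 ?divr_gt0 ?exprn_even_gt0 //.
rewrite subr_ge0 ler_pdivlMr // mul1r => /esym/le_trans/(_ (ler_norm b)).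
by rewrite gerDl ler10.
Qed.

Section quadratic_forms.
Variables (R : realType) (n : nat).
Implicit Types (M : 'M[R]_n) (u v w : 'rV[R]_n).

Definition mxbilin M u v := \sum_i \sum_j u 0 i * M i j * v 0 j.
Definition sqnorm v := \sum_i v 0 i ^+ 2.

Lemma mxbilinC M u v : M^T = M -> mxbilin M u v = mxbilin M v u.
Proof.
move=> MT; rewrite /mxbilin exchange_big; apply: eq_bigr => i _; apply: eq_bigr => j _.
by rewrite -{1}MT mxE; ring.
Qed.

Lemma mxbilin_addZ M v w t : mxbilin M (v + t *: w) (v + t *: w) =
  mxbilin M v v + t * (mxbilin M v w + mxbilin M w v) + t ^+ 2 * mxbilin M w w.
Proof.
rewrite /mxbilin mulrDr !mulr_sumr -!big_split /=; apply: eq_bigr => i _.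
by rewrite !mulr_sumr -!big_split; apply: eq_bigr => j _; rewrite /= !mxE; ring.
Qed.

Lemma mxbilinZ M v t : mxbilin M (t *: v) (t *: v) = t ^+ 2 * mxbilin M v v.
Proof.
rewrite /mxbilin mulr_sumr; apply: eq_bigr => i _; rewrite mulr_sumr.
by apply: eq_bigr => j _; rewrite !mxE; ring.
Qed.

Lemma mxbilin_sub_sqr M u v : M^T = M ->
  mxbilin M v v - mxbilin M u u = mxbilin M (v - u) (v - u) + 2 * mxbilin M (v - u) u.
Proof.
move=> MT; have := mxbilin_addZ M u (v - u) 1; rewrite scale1r addrC subrK => ->.
by rewrite (mxbilinC (v - u) u MT); ring.
Qed.

Lemma sqnorm_ge0 v : 0 <= sqnorm v.
Proof. by apply: sumr_ge0 => i _; exact: sqr_ge0. Qed.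

Lemma sqnorm_addZ v w t :
  sqnorm (v + t *: w) = sqnorm v + t * (2 * \sum_i v 0 i * w 0 i) + t ^+ 2 * sqnorm w.
Proof.
rewrite /sqnorm mulr_sumr !mulr_sumr -!big_split /=; apply: eq_bigr => i _.
by rewrite !mxE; ring.
Qed.

Lemma sqnormZ v t : sqnorm (t *: v) = t ^+ 2 * sqnorm v.
Proof. by rewrite /sqnorm mulr_sumr; apply: eq_bigr => i _; rewrite !mxE exprMn. Qed.

Lemma sqnorm_eq0 v : (sqnorm v == 0) = (v == 0).
Proof.
rewrite /sqnorm psumr_eq0 => [|i _]; last exact: sqr_ge0.
apply/allP/eqP => [v0|-> i _]; last by rewrite mxE sqrf_eq0 eqxx implybT.
by apply/rowP => i; apply/eqP; rewrite mxE -sqrf_eq0 (implyP (v0 i _)) ?mem_index_enum.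
Qed.

Lemma continuous_mxbilin M : continuous (fun v => mxbilin M v v).
Proof.
move=> v; apply: differentiable_continuous.
rewrite (_ : (fun v => mxbilin M v v) =
  \sum_i \sum_j M i j *: ((fun v : 'rV_n => v 0 i) * (fun v : 'rV_n => v 0 j))).
  by apply: differentiable_sum => i; apply: differentiable_sum => j;
    apply/differentiableZ/differentiableM; exact: differentiable_coord.
apply/funext => x; rewrite /mxbilin fct_sumE; apply: eq_bigr => i _.
by rewrite fct_sumE; apply: eq_bigr => j _; rewrite -[RHS]/(M i j * (x 0 i * x 0 j)); ring.
Qed.

Lemma continuous_sqnorm : continuous sqnorm.
Proof.
move=> v; apply: differentiable_continuous.
rewrite (_ : sqnorm = \sum_i ((fun v : 'rV_n => v 0 i) * (fun v : 'rV_n => v 0 i))).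
  by apply: differentiable_sum => i; apply/differentiableM; exact: differentiable_coord.
by apply/funext => x; rewrite /sqnorm fct_sumE; apply: eq_bigr => i _; rewrite expr2.
Qed.

Lemma compact_unit_sphere : compact [set v : 'rV[R]_n | sqnorm v = 1].
Proof.
have sphere_closed : closed [set v : 'rV[R]_n | sqnorm v = 1].
  rewrite (_ : mkset _ = sqnorm @^-1` [set x | x = 1]) //.
  by apply: preimage_closed; [move=> v _; exact: continuous_sqnorm | exact: closed_eq].
have box_compact : compact [set v : 'rV[R]_n | forall i, `[-1, 1]%classic (v ord0 i)].
  exact: (@rV_compact R n (fun=> `[(-1 : R), 1]%classic) (fun=> @segment_compact R (-1) 1)).
apply: (subclosed_compact sphere_closed box_compact).
move=> v /= v1 i; rewrite /= in_itv /= -ler_norml; change (`|v 0 i| <= 1).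
have : `|v 0 i| ^+ 2 <= 1.
  rewrite real_normK ?num_real // -v1 /sqnorm (bigD1 i) //= lerDl.
  by apply: sumr_ge0 => j _; exact: sqr_ge0.
by have := normr_ge0 (v 0 i); nra.
Qed.

Lemma sqnorm_delta i : sqnorm (delta_mx 0 i) = 1.
Proof.
rewrite /sqnorm (bigD1 i) //= mxE !eqxx expr1n big1 ?addr0 // => j ji.
by rewrite mxE (negbTE ji) andbF expr0n.
Qed.

Lemma mxbilin_delta M v i : mxbilin M v (delta_mx 0 i) = (v *m M) 0 i.
Proof.
rewrite /mxbilin mxE; apply: eq_bigr => k _; rewrite (bigD1 i) //= mxE !eqxx mulr1.
by rewrite big1 ?addr0 // => j ji; rewrite mxE (negbTE ji) andbF mulr0.
Qed.

Lemma dot_delta v i : \sum_j v 0 j * (delta_mx 0 i : 'rV_n) 0 j = v 0 i.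
Proof.
rewrite (bigD1 i) //= mxE !eqxx mulr1 big1 ?addr0 // => j ji.
by rewrite mxE (negbTE ji) andbF mulr0.
Qed.

Lemma unit_sphere_minimizer M : (0 < n)%N -> exists2 c, sqnorm c = 1 &
  forall v, sqnorm v = 1 -> mxbilin M c c <= mxbilin M v v.
Proof.
move=> n_gt0; have sphere0 : [set v : 'rV[R]_n | sqnorm v = 1] !=set0.
  by exists (delta_mx 0 (Ordinal n_gt0)); exact: sqnorm_delta.
have cont : {within [set v | sqnorm v = 1], continuous (fun v => mxbilin M v v)}.
  by apply: continuous_subspaceT; exact: continuous_mxbilin.
have [c] := EVT_min_rV sphere0 (@compact_unit_sphere) cont.
by rewrite inE => c1 cmin; exists c => // v v1; apply: cmin; rewrite inE.
Qed.

Lemma mxbilin_ge_sphere M (m : R) :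
  (forall v, sqnorm v = 1 -> m <= mxbilin M v v) ->
  forall v, m * sqnorm v <= mxbilin M v v.
Proof.
move=> sphere_ge v; have [v0|v_neq0] := eqVneq (sqnorm v) 0.
  rewrite v0 mulr0; move/eqP: v0; rewrite sqnorm_eq0 => /eqP->.
  rewrite /mxbilin big1 // => i _.
  by rewrite big1 // => j _; rewrite !mxE !mul0r.
have v_gt0 : 0 < sqnorm v by rewrite lt0r v_neq0 sqnorm_ge0.
pose s := Num.sqrt (sqnorm v); have s_gt0 : 0 < s by rewrite sqrtr_gt0.
have s2 : s ^+ 2 = sqnorm v by rewrite sqr_sqrtr ?sqnorm_ge0.
have := sphere_ge (s^-1 *: v); rewrite sqnormZ mxbilinZ exprVn s2 mulVf //.
by rewrite ler_pdivlMl // mulrC => /(_ erefl).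
Qed.

(* First-order optimality of [c] in each coordinate direction [delta_mx 0 i]. *)
Lemma sphere_minimizer_eigenvector M c : M^T = M -> sqnorm c = 1 ->
  (forall v, mxbilin M c c * sqnorm v <= mxbilin M v v) ->
  c *m M = mxbilin M c c *: c.
Proof.
move=> MT c1 cmin; apply/rowP => i; rewrite [RHS]mxE; set m := mxbilin M c c.
pose e := (delta_mx 0 i : 'rV[R]_n).
have : forall t, 0 <= 2 * ((c *m M) 0 i - m * c 0 i) * t +
                     (mxbilin M e e - m * sqnorm e) * t ^+ 2.
  move=> t; have := cmin (c + t *: e).
  rewrite mxbilin_addZ sqnorm_addZ c1 (mxbilinC e c MT) mxbilin_delta dot_delta.
  rewrite -subr_ge0 => /le_trans; apply; rewrite -/m le_eqVlt.
  by apply/orP; left; apply/eqP; ring.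
move/linear_coef_eq0/eqP; rewrite mulf_eq0 pnatr_eq0 /= subr_eq0.
by move/eqP.
Qed.

Lemma posdef_lower_bound M : M^T = M -> (forall a, eigenvalue M a -> 0 < a) ->
  exists2 m : R, 0 < m & forall v, m * sqnorm v <= mxbilin M v v.
Proof.
move=> MT ev_gt0; have [n0|n_gt0] := posnP n.
  exists 1 => // v; have void (i : 'I_n) : False by case: i; rewrite n0.
  by rewrite /sqnorm /mxbilin !big1 ?mulr0 // => i; case: (void i).
have [c c1 cmin] := unit_sphere_minimizer M n_gt0.
have bound := mxbilin_ge_sphere cmin.
exists (mxbilin M c c) => //; apply: ev_gt0; apply/eigenvalueP; exists c.
  exact: sphere_minimizer_eigenvector.
by rewrite -sqnorm_eq0 c1 oner_eq0.
Qed.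

End quadratic_forms.

Definition coord (R : realType) (n : nat) (i : 'I_n) (x : 'cV[R]_n) : R := x i 0.

Fact coord_linear (R : realType) (n : nat) (i : 'I_n) : linear (@coord R n i).
Proof. by move=> a x y; rewrite /coord !mxE. Qed.

HB.instance Definition _ (R : realType) (n : nat) (i : 'I_n) :=
  GRing.isLinear.Build R 'cV[R]_n R *:%R (@coord R n i) (@coord_linear R n i).

Lemma is_diff_coord (R : realType) (n : nat) (i : 'I_n) (x : 'cV[R]_n) :
  is_diff x (@coord R n i) (@coord R n i).
Proof.
apply: DiffDef; first exact/linear_differentiable/coord_continuous.
by rewrite diff_lin //; exact: coord_continuous.
Qed.

Lemma is_diff_sum (R : realType) (V : normedModType R) (I : finType)
    (f df : I -> V -> R) (x : V) :
  (forall i, is_diff x (f i) (df i)) -> is_diff x (\sum_i f i) (\sum_i df i).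
Proof.
move=> fdf; apply: (big_ind2 (fun g dg => is_diff x g dg)) => [|g dg g' dg' gd g'd|i _].
- exact: is_diff_cst.
- exact: is_diffD.
- exact: fdf.
Qed.

Section quartic_energy.
Variables (R : realType) (n : nat).
Implicit Types (A : 'M[R]_n) (x y l : 'cV[R]_n).

Definition quartic_energy A (beta : R) x :=
  beta / 4%:R * \sum_i x i 0 ^+ 4 - 2%:R^-1 * mxbilin A x^T x^T.

Lemma Hfun_quartic_energy (J : 'M[R]_n) (alpha beta : R) :
  Hfun J alpha beta = quartic_energy (J + alpha%:M) beta.
Proof.
apply/funext => x; rewrite /Hfun /quartic_energy /mxbilin -addrA -opprD; congr (_ - _).
rewrite !mxE exchange_big /=.
have inner j : \sum_i x^T 0 i * (J + alpha%:M) i j * x^T 0 j =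
    (x^T *m J) 0 j * x j 0 + alpha * x j 0 ^+ 2.
  under eq_bigr do rewrite !mxE mulrDr mulrDl.
  rewrite big_split /= mxE big_distrl /=; congr (_ + _).
    by apply: eq_bigr => i _; rewrite mxE.
  rewrite (bigD1 j) //= eqxx mulr1n big1 ?addr0 => [|i /negbTE ->]; first by ring.
  by rewrite mulr0n mulr0 mul0r.
under [in RHS]eq_bigr do rewrite inner.
by rewrite big_split /= -mulr_sumr; ring.
Qed.

Lemma quartic_energy_descent A (beta : R) x y : A^T = A -> 0 < beta ->
  (forall i, beta * y i 0 ^+ 3 = \sum_j A i j * x j 0) ->
  2%:R^-1 * mxbilin A (y - x)^T (y - x)^T <=
    quartic_energy A beta x - quartic_energy A beta y.
Proof.
move=> AT beta_gt0 yx; rewrite -subr_ge0.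
have cross : mxbilin A (y - x)^T x^T = \sum_i (y i 0 - x i 0) * \sum_j A i j * x j 0.
  apply: eq_bigr => i _; rewrite mulr_sumr.
  by apply: eq_bigr => j _; rewrite !mxE mulrA.
have -> : quartic_energy A beta x - quartic_energy A beta y -
    2%:R^-1 * mxbilin A (y - x)^T (y - x)^T =
    beta / 4%:R * (\sum_i x i 0 ^+ 4 - \sum_i y i 0 ^+ 4) + mxbilin A (y - x)^T x^T.
  have trB : (y - x)^T = y^T - x^T by rewrite linearB.
  have := mxbilin_sub_sqr x^T y^T AT; rewrite /quartic_energy trB; lra.
rewrite cross -sumrB mulr_sumr -big_split sumr_ge0 // => i _ /=; rewrite -yx.
have -> : beta / 4%:R * (x i 0 ^+ 4 - y i 0 ^+ 4) + (y i 0 - x i 0) * (beta * y i 0 ^+ 3) =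
    beta / 4%:R * ((y i 0 - x i 0) ^+ 2 * ((x i 0 + y i 0) ^+ 2 + 2%:R * y i 0 ^+ 2)).
  by field.
apply: mulr_ge0; first by rewrite divr_ge0 // ltW.
by rewrite mulr_ge0 ?sqr_ge0 // addr_ge0 ?sqr_ge0 // mulr_ge0 ?sqr_ge0.
Qed.

Lemma quartic_energyE A (beta : R) : quartic_energy A beta =
  (beta / 4%:R) *: \sum_i coord i ^+ 4 -
  2%:R^-1 *: \sum_i \sum_j A i j *: (coord i * coord j).
Proof.
apply/funext => x; rewrite /quartic_energy /mxbilin /= !fct_sumE.
congr (_ * _ - _ * _); apply: eq_bigr => i _; rewrite fct_sumE.
by apply: eq_bigr => j _; rewrite !mxE -[RHS]/(A i j * (x i 0 * x j 0)); ring.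
Qed.

Lemma quartic_energy_critical A (beta : R) l : A^T = A ->
  (forall i, beta * l i 0 ^+ 3 = \sum_j A i j * l j 0) ->
  critical_point (quartic_energy A beta) l.
Proof.
move=> AT fixl; rewrite quartic_energyE.
have dcoord := @is_diff_coord R n ^~ l.
have hd := is_diffB (is_diffZ (beta / 4%:R) (is_diff_sum (fun i => is_diffX 3 (dcoord i))))
  (is_diffZ 2%:R^-1 (is_diff_sum (fun i => is_diff_sum (fun j =>
     is_diffZ (A i j) (is_diffM (dcoord i) (dcoord j)))))).
split; first exact: (ex_diff (is_diff_def := hd)).
rewrite (diff_val (is_diff_def := hd)); apply/funext => h; rewrite !fct_sumE.
rewrite -[LHS]/(beta / 4%:R * \sum_i (4%:R * l i 0 ^+ 3 * h i 0) - 2%:R^-1 *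
  \sum_i (\sum_j A i j *: (coord i l *: coord j + coord j l *: coord i)) h).
under [X in _ - _ * X]eq_bigr do rewrite fct_sumE.
rewrite -[X in _ - _ * X]/(\sum_i \sum_j A i j * (l i 0 * h j 0 + l j 0 * h i 0)).
have -> : \sum_i \sum_j A i j * (l i 0 * h j 0 + l j 0 * h i 0) =
    2%:R * \sum_i h i 0 * \sum_j A i j * l j 0.
  have -> : \sum_i \sum_j A i j * (l i 0 * h j 0 + l j 0 * h i 0) =
      \sum_i \sum_j A j i * l j 0 * h i 0 + \sum_i \sum_j A i j * l j 0 * h i 0.
    rewrite [X in _ = X + _]exchange_big -big_split; apply: eq_bigr => i _.
    by rewrite -big_split; apply: eq_bigr => j _ /=; ring.
  rewrite -big_split mulr_sumr; apply: eq_bigr => i _ /=.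
  rewrite -big_split !mulr_sumr; apply: eq_bigr => j _ /=.
  by rewrite -{1}AT mxE; ring.
rewrite mulrA mulVf ?pnatr_eq0 // mul1r mulr_sumr -sumrB big1 // => i _.
by rewrite -fixl; field.
Qed.

Lemma quartic_energy_ge A (beta B : R) x : 0 < beta -> (forall i, `|x i 0| <= B) ->
  - (2%:R^-1 * \sum_i \sum_j `|A i j| * B ^+ 2) <= quartic_energy A beta x.
Proof.
move=> beta_gt0 xB; rewrite /quartic_energy lerNl opprB lerBDl.
have quartic_ge0 : 0 <= beta / 4%:R * \sum_i x i 0 ^+ 4.
  by rewrite mulr_ge0 ?divr_ge0 ?(ltW beta_gt0) ?sumr_ge0 // => i _; rewrite exprn_even_ge0.
rewrite ler_wpDl // ler_wpM2l ?invr_ge0 ?ler0n // ler_sum // => i _.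
rewrite ler_sum // => j _; rewrite !mxE (le_trans (ler_norm _)) // !normrM.
by rewrite mulrAC expr2 [`|A i j| * _]mulrC ler_wpM2r // ler_pM ?xB.
Qed.

End quartic_energy.

Lemma cbrtK (R : realType) (y : R) : cbrt y ^+ 3 = y.
Proof.
have root3 : (`|y| `^ 3%:R^-1) ^+ 3 = `|y|.
  by rewrite -powR_mulrn ?powR_ge0 // -powRrM mulVf ?pnatr_eq0 // powRr1.
rewrite /cbrt exprMn root3; have [->|y0] := eqVneq y 0; first by rewrite normr0 mulr0.
by rewrite sgr_odd // expr1 -numEsg.
Qed.

Lemma sym_add_scalar_mx (R : realType) n (J : 'M[R]_n) (alpha : R) :
  J^T = J -> (J + alpha%:M)^T = J + alpha%:M.
Proof. by move=> JT; rewrite linearD /= JT tr_scalar_mx. Qed.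

Section doch_dynamics.
Variables (R : realType) (n : nat) (J : 'M[R]_n) (alpha beta : R) (x0 : 'cV[R]_n).
Hypotheses (JT : J^T = J) (beta_gt0 : 0 < beta).

Local Notation A := (J + alpha%:M).
Local Notation x := (doch J alpha beta x0).

Let AT : A^T = A := sym_add_scalar_mx alpha JT.

Lemma doch_cube k i : x k.+1 i 0 ^+ 3 = \sum_j (beta^-1 *: A) i j * x k j 0.
Proof.
rewrite /doch iterS -/(doch J alpha beta x0 k) /phi mxE cbrtK !mxE mulr_sumr.
by apply: eq_bigr => j _; rewrite !mxE mulrA.
Qed.

Lemma doch_cube_scaled k i : beta * x k.+1 i 0 ^+ 3 = \sum_j A i j * x k j 0.
Proof.
rewrite doch_cube mulr_sumr; apply: eq_bigr => j _.
rewrite mxE; field; exact: lt0r_neq0.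
Qed.

Lemma doch_bounded : exists2 B : R, 0 <= B & forall k i, `|x k i 0| <= B.
Proof.
pose C := beta^-1 * \sum_i \sum_j `|A i j|; pose B := \sum_i `|x0 i 0| + C + 1.
have C_ge0 : 0 <= C.
  by rewrite mulr_ge0 ?invr_ge0 ?(ltW beta_gt0) ?sumr_ge0 // => *; rewrite sumr_ge0.
have x0_ge0 : 0 <= \sum_i `|x0 i 0| by rewrite sumr_ge0.
have B1 : 1 <= B by rewrite /B; lra.
have CB : C <= B by rewrite /B; lra.
have B_ge0 : 0 <= B by exact: le_trans ler01 B1.
exists B => //; elim=> [|k IH] i.
  apply: (@le_trans _ _ (\sum_i `|x0 i 0|)); last by rewrite /B; lra.
  by rewrite (bigD1 i) //= lerDl sumr_ge0.
rewrite -(@ler_pXn2r _ 3) ?nnegrE // -normrX doch_cube.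
apply: le_trans (ler_norm_sum _ _ _) _.
apply: (@le_trans _ _ (C * B)).
  apply: (@le_trans _ _ (\sum_j beta^-1 * `|A i j| * B)).
    apply: ler_sum => j _; rewrite mxE !normrM gtr0_norm ?invr_gt0 //.
    by rewrite ler_wpM2l ?mulr_ge0 ?invr_ge0 ?(ltW beta_gt0).
  rewrite -mulr_suml -mulr_sumr ler_wpM2r // ler_wpM2l ?invr_ge0 ?(ltW beta_gt0) //.
  by rewrite [X in _ <= X](bigD1 i) //= lerDl sumr_ge0 // => *; rewrite sumr_ge0.
apply: (le_trans (ler_wpM2r B_ge0 CB)).
by rewrite [B ^+ 3]exprS ler_wpM2l // expr2 ler_peMl.
Qed.

Hypothesis A_posdef : forall a, eigenvalue A a -> 0 < a.

Lemma doch_sqnorm_step_cvg0 : (fun k => sqnorm (x k.+1 - x k)^T) @ \oo --> 0.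
Proof.
have [m m_gt0 mA] := posdef_lower_bound AT A_posdef.
have [B B_ge0 xB] := doch_bounded.
pose E k := quartic_energy A beta (x k).
pose Emin := - (2%:R^-1 * \sum_i \sum_j `|A i j| * B ^+ 2).
have descent k : m / 2%:R * sqnorm (x k.+1 - x k)^T <= E k - E k.+1.
  apply: le_trans (quartic_energy_descent AT beta_gt0 (doch_cube_scaled k)).
  by rewrite mulrAC [2%:R^-1 * _]mulrC ler_wpM2r ?invr_ge0 ?ler0n.
have telescope N : \sum_(k < N) m / 2%:R * sqnorm (x k.+1 - x k)^T <= E 0%N - E N.
  elim: N => [|N IH]; first by rewrite big_ord0 subrr.
  by rewrite big_ord_recr /=; have := descent N; lra.
have m2_gt0 : 0 < m / 2%:R by rewrite divr_gt0.
apply: (@nneg_series_bounded_cvg0 _ _ ((E 0%N - Emin) / (m / 2%:R))) => [k|N].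
  exact: sqnorm_ge0.
rewrite ler_pdivlMr // mulrC mulr_sumr (le_trans (telescope N)) // lerB //.
exact: quartic_energy_ge.
Qed.

Lemma doch_step_cvg0 j : (fun k => x k.+1 j 0 - x k j 0) @ \oo --> 0.
Proof.
apply: cvg0_sqr_le doch_sqnorm_step_cvg0 => k.
by rewrite /sqnorm (bigD1 j) //= !mxE lerDl sumr_ge0 // => i _; exact: sqr_ge0.
Qed.

Lemma doch_residual_cvg0 :
  (fun k => residual_norm (beta^-1 *: A) (x k.+1)) @ \oo --> 0.
Proof.
pose a := beta^-1 *: A.
have bound k : 0 <= residual_norm a (x k.+1) <=
    \sum_i \sum_j `|a i j| * `|x k.+1 j 0 - x k j 0|.
  rewrite residual_norm_ge0 ler_sum // => i _.
  rewrite /cubic_residual doch_cube -sumrB (le_trans (ler_norm_sum _ _ _)) //.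
  by apply: ler_sum => j _; rewrite -mulrBr normrM distrC.
apply: (@squeeze_cvgr _ _ _ _ (fun=> 0)
  (fun k => \sum_i \sum_j `|a i j| * `|x k.+1 j 0 - x k j 0|)).
- exact: nearW bound.
- exact: cvg_cst.
have lim0 : \sum_(i < n) \sum_(j < n) `|a i j| * `|0 : R| = 0.
  by rewrite big1 // => i _; rewrite big1 // => j _; rewrite normr0 mulr0.
rewrite -[X in _ --> X]lim0.
apply: cvg_sum => i; apply: cvg_sum => j; apply: cvgMl_tmp.
by apply: cvg_norm; exact: doch_step_cvg0.
Qed.

Lemma doch_coord_cvg j : exists z : R, (fun k => x k j 0) @ \oo --> z.
Proof.
have [B B_ge0 xB] := doch_bounded.
have [p p0 [K pK]] := coord_annihilator (beta^-1 *: A) B_ge0 j.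
have [s [c c_gt0 cp]] := horner_lower_bound B p0.
have prod_small k : \prod_(z <- s) `|x k.+1 j 0 - z| <=
    K / c * residual_norm (beta^-1 *: A) (x k.+1).
  rewrite mulrAC ler_pdivlMr // mulrC (le_trans (cp _ (xB _ _))) //.
  by apply: pK => i; exact: xB.
have steps : (fun k => x k.+2 j 0 - x k.+1 j 0) @ \oo --> 0.
  by rewrite (cvg_shiftS (fun k => x k.+1 j 0 - x k j 0)); exact: doch_step_cvg0.
have near_roots e : 0 < e ->
    \forall k \near \oo, exists2 z, z \in s & `|x k.+1 j 0 - z| < e.
  move=> e_gt0; have Kres : (fun k => K / c * residual_norm (beta^-1 *: A) (x k.+1))
      @ \oo --> K / c * 0 by apply: cvgMl_tmp; exact: doch_residual_cvg0.
  rewrite mulr0 in Kres.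
  apply: filterS ((cvgrPdist_lt _ _).1 Kres _ (exprn_gt0 (size s) e_gt0)) => k.
  rewrite sub0r normrN => small.
  apply: near_seq_of_prod_small => //; apply: le_lt_trans small.
  exact: le_trans (prod_small k) (ler_norm _).
have [z _ xz] := cvg_slow_near_seq steps near_roots.
by exists z; rewrite -(cvg_shiftS (fun k => x k j 0)).
Qed.

Lemma doch_cvg_fixed_point : exists2 l : 'cV[R]_n, x @ \oo --> l &
  forall i, beta * l i 0 ^+ 3 = \sum_j A i j * l j 0.
Proof.
have [lim xlim] := choice doch_coord_cvg.
exists (\col_j lim j) => [|i].
  by apply: cvg_mx_entries => i j; rewrite (ord1 j) mxE; exact: xlim.
have xlimS j : (fun k => x k.+1 j 0) @ \oo --> lim j.
  by rewrite (cvg_shiftS (fun k => x k j 0)); exact: xlim.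
have lhs : (fun k => beta * x k.+1 i 0 ^+ 3) @ \oo --> beta * lim i ^+ 3.
  by apply: cvgMl_tmp; rewrite !exprS expr0 mulr1; do 2?apply: cvgM; exact: xlimS.
have rhs : (fun k => beta * x k.+1 i 0 ^+ 3) @ \oo --> \sum_j A i j * lim j.
  under eq_fun do rewrite doch_cube_scaled.
  by apply: cvg_sum => j; apply: cvgMl_tmp; exact: xlim.
rewrite mxE (cvg_unique (@Rhausdorff R) lhs rhs).
by apply: eq_bigr => j _; rewrite mxE.
Qed.

End doch_dynamics.

Theorem theoremS2 (R : realType) (n : nat) (J : 'M[R]_n) (alpha beta : R)
  (x0 : 'cV[R]_n) :
  J^T = J ->
  (forall i, J i i = 0) ->
  0 < alpha -> 0 < beta ->
  (forall a : R, eigenvalue (J + alpha%:M) a -> 0 < a) ->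
  exists2 l : 'cV[R]_n,
    doch J alpha beta x0 @ \oo --> l & critical_point (Hfun J alpha beta) l.
Proof.
move=> JT _ _ beta_gt0 A_posdef.
have [l xl fixl] := doch_cvg_fixed_point x0 JT beta_gt0 A_posdef.
exists l => //; rewrite Hfun_quartic_energy.
exact: quartic_energy_critical (sym_add_scalar_mx alpha JT) fixl.
Qed.
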